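(* Let $X$ be an uncountable regular open Whyburn space. Then $X$ is $\mathcal{K}$-Lindel\''{o}f if and only if $X$ is a Lusin space.
   Context: A space $X$ is open Whyburn if for every open set $A\subseteq X$ and every point $x\in\overline{A}\setminus A$ there is an open set $B\subseteq A$ with $\overline{B}\setminus A=\{x\}$. $\mathcal{K}$ denotes the collection of all families $\mathcal{U}$ of open subsets of $X$ such that $X=\bigcup\{\overline{U}:U\in\mathcal{U}\}$. $X$ is $\mathcal{K}$-Lindel\''{o}f if every $\mathcal{U}\in\mathcal{K}$ has a countable subfamily belonging to $\mathcal{K}$. A Hausdorff space $X$ is a Lusin space (in the sense of Kunen) if (a) every nowhere dense subset of $X$ is countable, (b) $X$ has at most countably many isolated points, and (c) $X$ is uncountable. *)

From HB Require Import structures.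
From mathcomp Require Import all_boot all_order all_algebra.
From mathcomp Require Import all_classical all_reals all_analysis.
Set Implicit Arguments. Unset Strict Implicit. Unset Printing Implicit Defensive.
Local Open Scope classical_set_scope.

Definition open_whyburn (T : topologicalType) : Prop :=
  forall A : set T, open A -> forall x : T, closure A x -> ~ A x ->
    exists B : set T, [/\ open B, B `<=` A & closure B `\` A = [set x]].

Definition in_K (T : topologicalType) (U : set (set T)) : Prop :=
  (forall u, U u -> open u) /\ \bigcup_(u in U) closure u = [set: T].

Definition K_lindelof (T : topologicalType) : Prop :=
  forall U : set (set T), in_K U ->
    exists V : set (set T), [/\ V `<=` U, countable V & in_K V].

Definition nowhere_dense (T : topologicalType) (A : set T) : Prop :=
  (closure A)° = set0.

Definition isolated_point (T : topologicalType) (x : T) : Prop :=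
  open [set x].

(* Lusin space in the sense of Kunen *)
Definition lusin_space (T : topologicalType) : Prop :=
  [/\ hausdorff_space T,
      (forall A : set T, nowhere_dense A -> countable A),
      countable [set x : T | isolated_point x]
    & ~ countable [set: T]].

Definition regular_T1 (T : topologicalType) : Prop :=
  regular_space T /\ accessible_space T.

From mathcomp Require Import all_boot all_order all_algebra.
From mathcomp Require Import all_classical all_reals all_analysis.
From mathcomp Require wochoice.
Local Open Scope classical_set_scope.

(* A family whose closures cover X can be thinned only if the thinning keeps
   every member that is the sole cover of some point.  For a closed set C with
   empty interior, open Whyburn gives for each x in C an open B_x outside C
   whose closure meets C exactly in x; with the regular neighbourhoods of points
   off C this forces C to be countable, hence every nowhere dense set is.  For
   the set I of isolated points, cl I \ I is closed nowhere dense, so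
   countable, and an Ulam matrix argument yields an uncountable Q in I such that
   I \ Q still accumulates at every point of cl I \ I: the singletons of Q then
   cannot be dropped.  Conversely, in a Lusin space a point chosen in each
   member of a disjoint family of nonempty open sets gives a discrete set,
   nowhere dense off the isolated points, so such families are countable; a
   maximal one refining a family U picks countably many members of U whose
   closures cover a dense open set, and the nowhere dense rest is countable. *)

Lemma countableU {T} {A B : set T} :
  countable A -> countable B -> countable (A `|` B).
Proof.
move=> cA cB; rewrite -bigcup2E.
by apply: bigcup_countable => // -[|[|n]] _.
Qed.

Lemma countable_inj {T U} {A : set T} {B : set U} (f : T -> U) :
  {in A &, injective f} -> f @` A `<=` B -> countable B -> countable A.
Proof.
move=> /inj_card_eq fA AB cB; rewrite -(eq_countable fA).
exact: sub_countable (subset_card_le AB) cB.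
Qed.

Lemma uncountable_bigcup {T} (F : nat -> set T) :
  ~ countable (\bigcup_n F n) -> exists n, ~ countable (F n).
Proof.
move=> nF; apply: contrapT => /forallNP cF.
by apply/nF/bigcup_countable => // n _; apply: contrapT; exact: cF.
Qed.

Lemma uncountable_countable_initial_segments {T : choiceType} (I : set T) :
  ~ countable I -> exists (J : set T) (lt : T -> T -> Prop),
  [/\ J `<=` I, ~ countable J,
      forall a b, J a -> J b -> a <> b -> lt a b \/ lt b a &
      forall a, J a -> countable [set b | J b /\ lt b a]].
Proof.
move=> nI; have [R woR] := wochoice.well_ordering_principle T.
have woT : wochoice.wo_chain R (mem predT) by move=> A _; exact: woR.
have R_total x y : R x y || R y x by exact: (wochoice.wo_chainW woT).
have R_anti x y : R x y -> R y x -> x = y.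
  move=> xy yx; apply: (wochoice.wo_chain_antisymmetric woT) => //.
  by rewrite xy yx.
pose lt x y := R x y /\ x <> y.
pose below a := [set b | I b /\ lt b a].
pose J := [set a | I a /\ countable (below a)].
exists J, lt; split.
- by move=> a [].
- have [[x [Ix nx]]|all_countable] :=
    pselect (exists x, I x /\ ~ countable (below x)).
  + pose A : {pred T} := [pred x | `[< I x /\ ~ countable (below x) >]].
    have [z [[+ z_min] _]] := woR A (ex_intro _ x (asboolT (conj Ix nx))).
    rewrite inE /= => -[Iz nz] cJ; apply/nz/(sub_countable _ cJ).
    apply: subset_card_le => y [Iy [Ryz yz]]; split => //.
    apply: contrapT => ny; apply/yz/R_anti => //.
    by apply: z_min; rewrite inE /=.
  + suff -> : J = I by [].
    apply/seteqP; split => [y []//|y Iy]; split => //.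
    by apply: contrapT => ny; apply: all_countable; exists y.
- move=> a b _ _ ab; have ba : b <> a by move=> /esym.
  by case/orP: (R_total a b); [left|right].
- move=> a [_ ca]; apply: (sub_countable _ ca); apply: subset_card_le.
  by move=> b [[]].
Qed.

Lemma uncountable_disjoint_family {T : choiceType} (I : set T) :
  ~ countable I -> exists (J : set T) (Q : T -> set T),
  [/\ ~ countable J, forall b, J b -> Q b `<=` I /\ ~ countable (Q b) &
      forall b b', J b -> J b' -> Q b `&` Q b' !=set0 -> b = b'].
Proof.
move=> /uncountable_countable_initial_segments [J [lt [JI nJ lt_total cbelow]]].
pose below a := [set b | J b /\ lt b a].
have /choice [f f_inj] : forall a, exists f : T -> nat,
    J a -> {in below a &, injective f}.
  move=> a; have [Ja|nJa] := pselect (J a); last by exists (fun=> 0%N) => /nJa.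
  by have /countable_injP [f] := cbelow a Ja; exists f.
(* Ulam's matrix *)
pose Q n b := [set a | J a /\ lt b a /\ f a b = n].
have Q_disjoint n b b' : J b -> J b' -> Q n b `&` Q n b' !=set0 -> b = b'.
  move=> Jb Jb' [a [[Ja [ba fab]] [_ [b'a fab']]]].
  by apply: (f_inj a Ja); rewrite ?inE ?fab ?fab'.
have row_uncountable b : J b -> exists n, ~ countable (Q n b).
  move=> Jb; apply: uncountable_bigcup => cQ; apply: nJ.
  have succ_countable : countable [set a | J a /\ lt b a].
    apply: (sub_countable _ cQ); apply: subset_card_le => a [Ja ba].
    by exists (f a b) => //.
  have := countableU succ_countable (countableU (cbelow b Jb) (countable1 b)).
  apply: sub_countable; apply: subset_card_le => a Ja.
  have [->|ab] := pselect (a = b); first by right; right.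
  by case: (lt_total a b Ja Jb ab) => ?; [right; left | left].
have [n Jn] : exists n, ~ countable [set b | J b /\ ~ countable (Q n b)].
  apply: uncountable_bigcup => cJn; apply/nJ/(sub_countable _ cJn).
  apply: subset_card_le => b Jb; have [n nQ] := row_uncountable b Jb.
  by exists n.
exists [set b | J b /\ ~ countable (Q n b)], (Q n); split => //.
- by move=> b [Jb nQ]; split => // a [Ja _]; exact: JI.
- by move=> b b' [Jb _] [Jb' _]; exact: Q_disjoint.
Qed.

Lemma uncountable_subset_avoiding {T : choiceType} {T'} {I : set T} {N : set T'}
    {F : T' -> set (set T)} :
  ~ countable I -> countable N ->
  (forall x, N x -> forall Q Q', F x Q -> F x Q' -> Q `&` Q' !=set0) ->
  exists Q, [/\ Q `<=` I, ~ countable Q & forall x, N x -> ~ F x Q].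
Proof.
move=> /uncountable_disjoint_family [J [Q [nJ QI Q_disjoint]]] cN F_meets.
suff [b Jb F_avoid] : exists2 b, J b & forall x, N x -> ~ F x (Q b).
  by have [QbI nQb] := QI b Jb; exists (Q b).
apply: contrapT => none_avoids; apply: nJ.
have J_caught : J `<=` \bigcup_(x in N) [set b | J b /\ F x (Q b)].
  move=> b Jb; apply: contrapT => ncaught; apply: none_avoids.
  by exists b => // x Nx Fx; apply: ncaught; exists x.
apply: (sub_countable (subset_card_le J_caught)).
apply: bigcup_countable => // x Nx; apply/countable_injP.
exists (fun=> 0%N) => b b'; rewrite !inE => -[Jb Fb] [Jb' Fb'] _.
exact/Q_disjoint/(F_meets x Nx).
Qed.

Lemma ex_maximal_disjoint_family {U : Type} (D : set (set U)) :
  exists E, [/\ E `<=` D, trivIset E id &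
    forall G, D G -> G !=set0 -> exists2 H, E H & G `&` H !=set0].
Proof.
have [E [ED tE maxE]] := ex_maximal_disjoint_subcollection id D.
exists E; split=> // G DG [g Gg]; apply: contrapT => nmeet.
have nEG : ~ E G by move=> EG; apply: nmeet; exists G => //; exists g.
apply: (maxE (E `|` [set G])).
- by split=> [H EH|/(_ G (or_intror erefl))]; [left|].
- by move=> H [/ED|->].
- move=> H H' [EH|->] [EH'|->] //= HH'; first exact: tE.
    by case: nmeet; exists H => //; rewrite setIC.
  by case: nmeet; exists H'.
Qed.

Section topology.
Context {T : topologicalType}.
Implicit Types (A C D G M O W : set T) (U E : set (set T)).

Lemma closureP A x : closure A x <-> forall O, open O -> O x -> A `&` O !=set0.
Proof.
split=> [clAx O oO Ox|AO B]; first exact/clAx/open_nbhs_nbhs.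
rewrite nbhsE => -[V [oV Vx] VB]; have [y [Ay Vy]] := AO V oV Vx.
by exists y; split => //; exact: VB.
Qed.

Lemma interior_closureD0 A : (closure A `\` A)° = set0.
Proof.
apply/seteqP; split => // z Nz.
have [y [Ay Ny]] :=
  (closureP _ _).1 (interior_subset Nz).1 _ (open_interior _) Nz.
by have [] := interior_subset Ny.
Qed.

Lemma open_sub_isolated A : A `<=` [set x | isolated_point x] -> open A.
Proof.
move=> AI; have -> : A = \bigcup_(x in A) [set x].
  by apply/seteqP; split => [x Ax|x [y Ay ->]] //; exists x.
exact: bigcup_open.
Qed.

Section regular.
Hypothesis hr : regular_space T.

Lemma regular_open_nbhs {O x} : open O -> O x ->
  exists W, [/\ open W, W x & closure W `<=` O].
Proof.
move=> oO Ox; have := hr x O (open_nbhs_nbhs (conj oO Ox)).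
rewrite /= nbhs_simpl => -[V xV clVO]; exists V°; split.
- exact: open_interior.
- exact: nbhs_singleton (nbhs_interior xV).
- exact: subset_trans (closureS (@interior_subset _ V)) clVO.
Qed.

Lemma regular_closure_avoid {A z} : ~ closure A z ->
  exists W, [/\ open W, W z & closure W `<=` ~` A].
Proof.
move=> nAz; have oAc : open (~` closure A).
  exact/closed_openC/closed_closure.
have [W [oW Wz clW]] := regular_open_nbhs oAc nAz.
by exists W; split => // y /clW; apply: contra_not; exact: subset_closure.
Qed.

Lemma regular_accessible_hausdorff : accessible_space T -> hausdorff_space T.
Proof.
move=> hT p q clpq; apply: contrapT => /eqP pq.
have [A [oA pA qA]] := hT _ _ pq; rewrite inE in pA; rewrite inE /= in qA.
have [W [oW Wp clWA]] := regular_open_nbhs oA pA.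
have q_clWc : nbhs q (~` closure W).
  apply: open_nbhs_nbhs; split; first exact/closed_openC/closed_closure.
  by move=> /clWA.
have [z [Wz]] := clpq W _ (open_nbhs_nbhs (conj oW Wp)) q_clWc.
by apply; exact: subset_closure.
Qed.

End regular.

Lemma in_KP U : in_K U <->
  (forall u, U u -> open u) /\ (forall x, exists2 u, U u & closure u x).
Proof.
split=> -[oU cover]; split=> //.
- by move=> x; have : [set: T] x by []; rewrite -cover => -[u]; exists u.
- by apply/seteqP; split=> // x _; have [u] := cover x; exists u.
Qed.

Lemma K_lindelof_private_countable C (u : T -> set T) (R : set (set T)) :
  K_lindelof T ->
  in_K (u @` C `|` R) ->
  (forall x y, C x -> C y -> closure (u y) x -> y = x) ->
  (forall x r, C x -> R r -> ~ closure r x) -> countable C.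
Proof.
move=> hK KU u_private R_avoid.
have [V [VU cV /in_KP [_ V_cover]]] := hK _ KU.
have u_in_V x : C x -> V (u x) /\ closure (u x) x.
  move=> Cx; have [v Vv clv] := V_cover x.
  case: (VU v Vv) => [[y Cy yv]|Rv]; last by have := R_avoid x v Cx Rv.
  by rewrite -yv in Vv clv; have yx := u_private x y Cx Cy clv; subst y.
apply: (countable_inj u _ _ cV).
- move=> x y; rewrite !inE => Cx Cy uxy.
  by apply: (u_private y x) => //; rewrite uxy; exact: (u_in_V y Cy).2.
- by move=> _ [x Cx <-]; exact: (u_in_V x Cx).1.
Qed.

Section whyburn.
Hypotheses (hr : regular_space T) (hw : open_whyburn T) (hK : K_lindelof T).

Lemma K_lindelof_closed_interior0_countable C : closed C -> C° = set0 ->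
  countable C.
Proof.
move=> cC C0; have oCc : open (~` C) := closed_openC cC.
have /choice [B BP] : forall x, exists B,
    C x -> [/\ open B, B `<=` ~` C & closure B `\` ~` C = [set x]].
  move=> x; have [Cx|nCx] := pselect (C x); last by exists set0 => /nCx.
  have x_limit : closure (~` C) x by rewrite closure_setC C0.
  by have [B] := hw _ oCc x x_limit (fun nCx => nCx Cx); exists B.
have B_trace x y : C x -> C y -> closure (B y) x -> y = x.
  move=> Cx Cy clBx; have [_ _ trace] := BP y Cy.
  have : (closure (B y) `\` ~` C) x by split => // /(_ Cx).
  by rewrite trace.
apply: (K_lindelof_private_countable C B
  [set W | open W /\ closure W `<=` ~` C] hK) => //; last first.
  by move=> x W Cx [_ clW] /clW.
apply/in_KP; split=> [_ [[x Cx <-]|[]//]|z]; first by have [] := BP x Cx.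
have [Cz|nCz] := pselect (C z).
  exists (B z); first by left; exists z.
  have [_ _ trace] := BP z Cz.
  by have : [set z] z by []; rewrite -trace => -[].
have nclz : ~ closure C z by move: cC; rewrite closure_id => <-.
have [W [oW Wz clW]] := regular_closure_avoid hr nclz.
by exists W; [right | exact: subset_closure].
Qed.

Lemma K_lindelof_nowhere_dense_countable A : nowhere_dense A -> countable A.
Proof.
move=> ndA; apply: (sub_countable (subset_card_le (@subset_closure _ A))).
exact: K_lindelof_closed_interior0_countable (@closed_closure _ A) ndA.
Qed.

Lemma K_lindelof_isolated_countable : countable [set x : T | isolated_point x].
Proof.
set I := [set x : T | isolated_point x].
have oI : open I by exact: open_sub_isolated.
pose N := closure I `\` I.
have cN : countable N.
  apply: K_lindelof_closed_interior0_countable; last exact: interior_closureD0.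
  rewrite /N setDE; apply: closedI; first exact: closed_closure.
  exact: open_closedC.
apply: contrapT => nI.
have nbhs_meets x : N x -> forall Q Q',
    nbhs x (~` I `|` Q) -> nbhs x (~` I `|` Q') -> Q `&` Q' !=set0.
  move=> [clIx _] Q Q' xQ xQ'.
  have [y [Iy [QIy Q'Iy]]] := clIx _ (filterI xQ xQ').
  by exists y; split; [case: QIy | case: Q'Iy].
have [Q [QI nQ Q_avoid]] := uncountable_subset_avoiding
  (F := fun x Q => nbhs x (~` I `|` Q)) nI cN nbhs_meets.
(* [P] accumulates at every point of [N], while each point of [Q] is covered
   only by its own singleton. *)
pose P := I `\` Q.
have N_clP x : N x -> closure P x.
  move=> Nx B xB; apply: contrapT => PB0; apply: (Q_avoid x Nx).
  apply: filterS xB => y By; have [Iy|] := pselect (I y); last by left.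
  by right; apply: contrapT => nQy; apply: PB0; exists y.
have Q_open y : Q y -> open [set y] by move/QI.
apply/nQ/(K_lindelof_private_countable Q (fun y => [set y])
  ([set P] `|` [set W | open W /\ closure W `<=` ~` I]) hK).
- apply/in_KP; split=> [_ [[y Qy <-]|[->|[]//]]|z]; first exact: Q_open.
    by apply: open_sub_isolated => y [].
  have [Iz|nIz] := pselect (I z).
    have [Qz|nQz] := pselect (Q z).
      by exists [set z]; [left; exists z | exact: subset_closure].
    by exists P; [right; left | exact: subset_closure].
  have [clz|nclz] := pselect (closure I z).
    by exists P; [right; left | exact: N_clP].
  have [W [oW Wz clW]] := regular_closure_avoid hr nclz.
  by exists W; [right; right | exact: subset_closure].
- move=> x y Qx Qy /(closureP _ _) /(_ _ (Q_open x Qx) erefl) [_ [-> _]] //.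
- move=> x r Qx [->|[_ clW]] clx; last exact: clW clx (QI x Qx).
  have [y [[_ nQy] yx]] := (closureP _ _).1 clx _ (Q_open x Qx) erefl.
  by rewrite yx in nQy.
Qed.

End whyburn.

Section lusin.
Hypothesis hT : accessible_space T.

Lemma nowhere_dense_discrete D :
  (forall d, D d -> exists2 G, open G & G `&` D = [set d]) ->
  (forall d, D d -> ~ isolated_point d) -> nowhere_dense D.
Proof.
move=> D_discrete D_nonisolated; apply/seteqP; split=> // z Oz.
have oO : open (closure D)° := open_interior _.
have [w [Dw Ow]] := (closureP _ _).1 (interior_subset Oz) _ oO Oz.
have [G oG GD] := D_discrete w Dw.
have [v [[Ov Gv] vw]] : exists v, ((closure D)° `&` G) v /\ v <> w.
  apply: contrapT => only_w; apply: (D_nonisolated w Dw).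
  rewrite /isolated_point.
  suff -> : [set w] = (closure D)° `&` G by exact: openI.
  apply/seteqP; split=> [_ ->|v OGv]; last first.
    by apply: contrapT => vw; apply: only_w; exists v.
  by split=> //; have : [set w] w by []; rewrite -GD => -[].
have ow : open (~` [set w]) by rewrite openC; exact: accessible_closed_set1.
have [q [Dq [[Oq Gq] qw]]] := (closureP _ _).1 (interior_subset Ov) _
  (openI (openI oO oG) ow) (conj (conj Ov Gv) vw).
by apply: qw; have : (G `&` D) q by []; rewrite GD.
Qed.

Lemma nowhere_dense_disjoint_dense_open {G M} :
  open G -> dense G -> M `&` G = set0 -> nowhere_dense M.
Proof.
move=> oG dG MG0; apply/seteqP; split=> // z Mz.
have [m [Om Gm]] := dG _ (ex_intro _ z Mz) (open_interior _).
have [m' [Mm' Gm']] := interior_subset Om G (open_nbhs_nbhs (conj oG Gm)).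
by have : (M `&` G) m' by []; rewrite MG0.
Qed.

Section countable_nowhere_dense.
Hypotheses (hnd : forall A, nowhere_dense A -> countable A)
  (hiso : countable [set x : T | isolated_point x]).

Lemma disjoint_open_family_countable E :
  (forall G, E G -> open G /\ G !=set0) -> trivIset E id -> countable E.
Proof.
move=> oE tE; have [[G0 EG0]|noE] := pselect (exists G, E G); last first.
  by have -> : E = set0 by apply/seteqP; split=> // G EG; apply: noE; exists G.
have [x0 _] := (oE G0 EG0).2.
have /choice [p pG] : forall G, exists x, E G -> G x.
  move=> G; have [EG|nEG] := pselect (E G); last by exists x0.
  by have [_ [x Gx]] := oE G EG; exists x.
have p_inj : {in E &, injective p}.
  move=> G G'; rewrite !inE => EG EG' pGG'; apply: tE => //.
  by exists (p G); split; [exact: pG | rewrite pGG'; exact: pG].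
pose D := p @` E `\` [set x | isolated_point x].
have D_nowhere_dense : nowhere_dense D.
  apply: nowhere_dense_discrete => [_ [[G EG <-] nisoG]|_ [] //].
  exists G; first exact: (oE G EG).1.
  apply/seteqP; split=> [q [Gq [[G' EG' pG'q] _]]|_ ->].
    rewrite -pG'q in Gq *; congr p; apply: (tE G' G) => //.
    by exists (p G'); split; [exact: pG|].
  by split; [exact: pG | split; [exists G|]].
apply: (countable_inj p p_inj _ (countableU (hnd D D_nowhere_dense) hiso)).
move=> _ [G EG <-]; have [iso|niso] := pselect (isolated_point (p G)).
  by right.
by left; split=> //; exists G.
Qed.

Lemma nowhere_dense_countable_K_lindelof : K_lindelof T.
Proof.
move=> U /in_KP [oU U_cover].
pose D := [set G | [/\ open G, G !=set0 & exists2 u, U u & G `<=` u]].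
have [E [ED tE E_max]] := ex_maximal_disjoint_family D.
have cE : countable E.
  by apply: disjoint_open_family_countable => // G /ED [].
have /choice [u uP] : forall G, exists u, D G -> U u /\ G `<=` u.
  move=> G; have [[_ _ [u Uu Gu]]|nDG] := pselect (D G); first by exists u.
  by exists set0 => /nDG.
have E_dense : dense (\bigcup_(H in E) H).
  move=> O [z Oz] oO; have [u0 Uu0 clz] := U_cover z.
  have [y [u0y Oy]] := (closureP _ _).1 clz O oO Oz.
  have DOu0 : D (O `&` u0).
    by split; [exact: openI (oU _ Uu0) | exists y | exists u0 => // ? []].
  have [H EH [w [[Ow _] Hw]]] := E_max _ DOu0 (ex_intro _ y (conj Oy u0y)).
  by exists w; split => //; exists H.
pose M := ~` \bigcup_(G in E) closure (u G).
have cM : countable M.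
  apply/hnd/(nowhere_dense_disjoint_dense_open _ E_dense).
    by apply: bigcup_open => G /ED [].
  apply/seteqP; split=> // x [Mx [G EG Gx]]; apply: Mx; exists G => //.
  exact/subset_closure/(uP G (ED _ EG)).2.
have /choice [u' u'P] : forall x, exists u, U u /\ closure u x.
  by move=> x; have [v Uv clv] := U_cover x; exists v.
have uU G : E G -> U (u G) by move=> /ED /uP [].
exists (u @` E `|` u' @` M); split.
- by move=> _ [[G EG <-]|[x _ <-]]; [exact: uU | exact: (u'P x).1].
- exact: countableU (sub_countable (card_image_le _ _) cE)
    (sub_countable (card_image_le _ _) cM).
- apply/in_KP; split=> [_ [[G EG <-]|[x _ <-]]|z].
  + exact/oU/uU.
  + exact/oU/(u'P x).1.
  + have [Mz|/contrapT [G EG clz]] := pselect (M z).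
      by exists (u' z); [right; exists z | exact: (u'P z).2].
    by exists (u G) => //; left; exists G.
Qed.

End countable_nowhere_dense.
End lusin.
End topology.

Theorem corollary3p3 (T : topologicalType) :
  ~ countable [set: T] -> regular_T1 T -> open_whyburn T ->
  (K_lindelof T <-> lusin_space T).
Proof.
move=> nT [hr hT] hw; split=> [hK|[_ hnd hiso _]].
- split=> //.
  + exact: regular_accessible_hausdorff.
  + exact: K_lindelof_nowhere_dense_countable.
  + exact: K_lindelof_isolated_countable.
- exact: nowhere_dense_countable_K_lindelof.
Qed.
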